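(* Let $n$ be a prime, let $\alpha$ be a primitive element of $\mathbb{F}_{2^n}$, identify $\mathbb{F}_2^n$ with $\mathbb{F}_{2^n}$ as $\mathbb{F}_2$-vector spaces, and let $k\ge 2$. If there exist $\frac{2^n-2}{(2^k-1)(2^k-2)}$ pairwise disjoint complete $k$-dimensional subspaces of $\mathbb{F}_2^n$, then there exists a Steiner structure $\mathbb{S}_2[2,k,n]$.
   Context: For a $k$-dimensional subspace $X=\{0,\alpha^{i_1},\dots,\alpha^{i_{2^k-1}}\}$ of $\mathbb{F}_2^n$ (exponents in $\mathbb{Z}_{2^n-1}$), its difference set is $\Delta(X)=\{i_r-i_s \bmod (2^n-1): 1\le r,s\le 2^k-1,\ r\ne s\}$. $X$ is complete if $|\Delta(X)|=(2^k-1)(2^k-2)$. Two complete subspaces $X,Y$ are disjoint complete if $\Delta(X)\cap\Delta(Y)=\varnothing$. A Steiner structure $\mathbb{S}_2[2,k,n]$ is a set of $k$-dimensional subspaces of $\mathbb{F}_2^n$ such that each $2$-dimensional subspace of $\mathbb{F}_2^n$ is contained in exactly one of them. *)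

From HB Require Import structures.
From mathcomp Require Import all_boot all_order all_algebra all_fingroup all_field.
Set Implicit Arguments. Unset Strict Implicit. Unset Printing Implicit Defensive.
Import GRing.Theory.
Local Open Scope ring_scope.

Section Defs.
Variables (F : finFieldType) (n : nat) (alpha : F).

(* Exponents live in Z_{2^n-1}; for x <> 0, dlog x is the unique i with
   alpha^i = x (alpha primitive).  Value for x = 0 is irrelevant. *)
Definition dlog (x : F) : 'Z_(2 ^ n - 1) :=
  odflt 0 [pick i : 'Z_(2 ^ n - 1) | alpha ^+ i == x].

Definition diffset (X : {set F}) : {set 'Z_(2 ^ n - 1)} :=
  [set dlog x - dlog y | x in X, y in X & [&& x != 0, y != 0 & x != y]].

(* F_2-subspace of F (viewed as F_2^n): contains 0 and closed under addition
   (scalars in F_2 = {0,1} act trivially); dimension k <=> 2^k elements. *)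
Definition is_F2subspace (X : {set F}) : bool :=
  (0 \in X) && [forall x in X, forall y in X, x + y \in X].

Definition ksubspace (k : nat) (X : {set F}) : bool :=
  is_F2subspace X && (#|X| == 2 ^ k)%N.

Definition complete (k : nat) (X : {set F}) : bool :=
  ksubspace k X && (#|diffset X| == (2 ^ k - 1) * (2 ^ k - 2))%N.

Definition disjoint_complete (k : nat) (X Y : {set F}) : bool :=
  [&& complete k X, complete k Y & diffset X :&: diffset Y == set0].

Definition steiner_structure (k : nat) (S : {set {set F}}) : Prop :=
  (forall X, X \in S -> ksubspace k X) /\
  (forall Y, ksubspace 2 Y -> #|[set X in S | Y \subset X]| = 1%N).

End Defs.

From Pilot Require Import Defs.
From HB Require Import structures.
From mathcomp Require Import all_boot all_order all_algebra all_fingroup all_field.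
From mathcomp Require Import zify.
Import GRing.Theory.
Local Open Scope ring_scope.
Set Implicit Arguments.
Unset Strict Implicit.
Unset Printing Implicit Defensive.

(* The discrete logarithm turns ratios into differences, so Delta(X) is the
   set of logarithms of the ratios x / y of distinct nonzero x, y in X; it is
   invariant under dilation X |-> cX, and completeness says that each ratio
   occurs for exactly one ordered pair (x, y).  The counting hypothesis
   forces the disjoint difference sets to partition the 2^n - 2 nonzero
   exponents.  The Steiner structure consists of all dilates cX of the given
   subspaces: a 2-dimensional subspace {0, x, y, x + y} lies in cX iff
   log(x / y) is in Delta(X) and c is the unique dilation factor mapping the
   pair of X with ratio x / y onto (x, y). *)

Section Subspaces.
Variable F : finFieldType.

Lemma ksubspaceD k (X : {set F}) x y :
  ksubspace k X -> x \in X -> y \in X -> x + y \in X.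
Proof. by case/andP=> /andP[_ /forall_inP addX] _ /addX/forall_inP; apply. Qed.

Definition dilate (c : F) (X : {set F}) : {set F} := [set c * v | v in X].

Definition dilates (C : {set {set F}}) : {set {set F}} :=
  [set dilate c X | X in C, c in [set~ 0%R]].

Lemma ksubspace_dilate k (X : {set F}) c :
  c != 0 -> ksubspace k X -> ksubspace k (dilate c X).
Proof.
move=> c0 kX; case/andP: (kX) => /andP[X0 _] /eqP cardX.
apply/andP; split; last by rewrite card_imset ?cardX //; exact: mulfI.
apply/andP; split; first by apply/imsetP; exists 0 => //; rewrite mulr0.
apply/forall_inP => _ /imsetP[a aX ->]; apply/forall_inP => _ /imsetP[b bX ->].
by rewrite -mulrDr imset_f // (ksubspaceD kX).
Qed.

Lemma dilates_ksubspace k (C : {set {set F}}) Z :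
  {in C, forall X, ksubspace k X} -> Z \in dilates C -> ksubspace k Z.
Proof.
move=> C_k /imset2P[X c XC]; rewrite !inE => c0 ->.
exact: ksubspace_dilate (C_k X XC).
Qed.

Hypothesis pcharF2 : 2 \in [pchar F].

Lemma ksubspace2_basis (Y : {set F}) : ksubspace 2 Y ->
  exists x y, [/\ x != 0, y != 0, x != y & Y = [set 0; x; y; x + y]].
Proof.
move=> Y2; case/andP: (Y2) => /andP[Y0 _] /eqP cardY.
have card_nzY : #|Y :\ 0| = 3%N.
  by have := cardsD1 0 Y; rewrite Y0 cardY add1n => -[].
have /card_gt0P[x] : (0 < #|Y :\ 0%R|)%N by rewrite card_nzY.
rewrite !inE => /andP[x0 xY].
have : (0 < #|Y :\ 0%R :\ x|)%N.
  by have := cardsD1 x (Y :\ 0); rewrite !inE x0 xY card_nzY add1n => -[<-].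
case/card_gt0P=> y; rewrite !inE => /and3P[yx y0 yY].
have xy : x != y by rewrite eq_sym.
have xy0 : x + y != 0 by rewrite addr_eq0 oppr_pchar2.
exists x, y; split=> //; apply/eqP; rewrite eq_sym eqEcard cardY.
apply/andP; split.
  apply/subsetP => w; rewrite !inE -!orbA.
  by case/or4P => /eqP->; rewrite ?(ksubspaceD Y2).
have -> : [set 0; x; y; x + y] = 0 |: (x |: (y |: [set x + y])).
  by apply/setP => w; rewrite !inE !orbA.
have xxy : x != x + y by rewrite -{1}[x]addr0 (inj_eq (addrI x)) eq_sym.
have yxy : y != x + y by rewrite -{1}[y]add0r (inj_eq (addIr y)) eq_sym.
by rewrite !cardsU1 cards1 !inE !negb_or !(eq_sym 0) x0 y0 xy0 xy xxy yxy.
Qed.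

End Subspaces.

Section DifferenceSets.
Variables (F : finFieldType) (n : nat) (alpha : F).
Hypotheses (n_gt1 : (1 < n)%N) (cardF : #|F| = (2 ^ n)%N)
           (prim : (2 ^ n - 1)%N.-primitive_root alpha).

Local Notation N := (2 ^ n - 1)%N.
Local Notation dlog := (dlog n alpha).
Local Notation diffset := (diffset n alpha).

Lemma order_gt1 : (1 < N)%N.
Proof.
have : (2 ^ 2 <= 2 ^ n)%N by rewrite leq_exp2l.
by rewrite expnS expn1; lia.
Qed.

Lemma Zp_order : (Zp_trunc N).+2 = N.
Proof. exact: Zp_cast order_gt1. Qed.

Lemma card_Zp_order : #|'Z_N| = N.
Proof. by rewrite card_ord Zp_order. Qed.

Lemma expr_Zp_inj (i j : 'Z_N) : alpha ^+ i = alpha ^+ j -> i = j.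
Proof.
move/eqP; rewrite (eq_prim_root_expr prim) => /eqP eq_ij; apply: val_inj.
by move: eq_ij; rewrite !modn_small // -[X in (_ < X)%N]Zp_order.
Qed.

Lemma expr_ZpD (i j : 'Z_N) : alpha ^+ (i + j)%R = alpha ^+ i * alpha ^+ j.
Proof.
have -> : nat_of_ord (i + j)%R = ((i + j) %% (Zp_trunc N).+2)%N by [].
by rewrite [X in (_ %% X)%N]Zp_order (prim_expr_mod prim) exprD.
Qed.

Lemma expf_order (x : F) : x != 0 -> x ^+ N = 1.
Proof.
move=> x0; apply: (mulIf x0); rewrite mul1r -exprSr.
have <- : #|F| = N.+1 by rewrite cardF; have := order_gt1; lia.
exact: expf_card.
Qed.

Lemma dlogK (x : F) : x != 0 -> alpha ^+ dlog x = x.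
Proof.
move=> x0; rewrite /Defs.dlog; case: pickP => [i /eqP //|/= no_log].
have [i def_x] := prim_rootP prim (expf_order x0).
have := no_log (inZp i).
by rewrite /= [X in (_ %% X)%N]Zp_order (prim_expr_mod prim) -def_x eqxx.
Qed.

Lemma dlog_inj (x y : F) : x != 0 -> y != 0 -> dlog x = dlog y -> x = y.
Proof. by move=> x0 y0 eq_xy; rewrite -(dlogK x0) -(dlogK y0) eq_xy. Qed.

Lemma dlog_div (x y : F) : x != 0 -> y != 0 -> dlog (x / y) = dlog x - dlog y.
Proof.
move=> x0 y0; have xy0 : x / y != 0 by rewrite mulf_neq0 ?invr_eq0.
apply: expr_Zp_inj; apply: (mulIf y0).
by rewrite dlogK // divfK // -{2}(dlogK y0) -expr_ZpD subrK dlogK.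
Qed.

Lemma dlog_div_neq0 (x y : F) : x != 0 -> y != 0 -> x != y -> dlog (x / y) != 0.
Proof.
move=> x0 y0 xy; apply/eqP => /(congr1 (fun i : 'Z_N => alpha ^+ i)).
by rewrite dlogK ?mulf_neq0 ?invr_eq0 // => /divr1_eq/eqP; apply/negP.
Qed.

Definition nzpairs (X : {set F}) : {set F * F} :=
  [set p | [&& p.1 \in X, p.2 \in X, p.1 != 0, p.2 != 0 & p.1 != p.2]].

Definition log_ratio (p : F * F) : 'Z_N := dlog (p.1 / p.2).

Lemma diffsetE (X : {set F}) : diffset X = log_ratio @: nzpairs X.
Proof.
apply/setP => d; apply/imset2P/imsetP.
  case=> x y xX; rewrite inE => /and4P[yX x0 y0 xy] ->.
  by exists (x, y); rewrite /log_ratio ?dlog_div // inE /= xX yX x0 y0 xy.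
case=> [[x y]]; rewrite inE /= => /and5P[xX yX x0 y0 xy] ->.
by exists x y; rewrite /log_ratio ?dlog_div // inE yX x0 y0 xy.
Qed.

Lemma card_nzpairs_le k (X : {set F}) :
  ksubspace k X -> (#|nzpairs X| <= (2 ^ k - 1) * (2 ^ k - 2))%N.
Proof.
case/andP=> /andP[X0 _] /eqP cardX; set X' := X :\ 0.
have cardX' : #|X'| = (2 ^ k - 1)%N.
  by have := cardsD1 0 X; rewrite X0 cardX add1n => ->; rewrite subn1.
set D := [set (x, x) | x in X'].
have sub_pairs : nzpairs X \subset setX X' X' :\: D.
  apply/subsetP => -[x y]; rewrite !inE /= => /and5P[xX yX x0 y0 xy].
  by rewrite xX yX x0 y0 !andbT; apply: contra xy => /imsetP[z _ [-> ->]].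
apply: (leq_trans (subset_leq_card sub_pairs)).
rewrite cardsD cardsX (setIidPr _); last first.
  by apply/subsetP => _ /imsetP[z zX ->]; rewrite inE /= zX.
rewrite card_imset; last by move=> a b [].
have -> : (2 ^ k - 2 = (2 ^ k - 1) - 1)%N by lia.
by rewrite cardX' [leqRHS]mulnBr muln1.
Qed.

Lemma complete_log_ratio_inj k (X : {set F}) :
  complete n alpha k X -> {in nzpairs X &, injective log_ratio}.
Proof.
case/andP=> kX /eqP card_diffset; apply/imset_injP.
rewrite -diffsetE card_diffset eqn_leq card_nzpairs_le //=.
by rewrite -card_diffset diffsetE leq_imset_card.
Qed.

Lemma diffset_neq0 (X : {set F}) : 0 \notin diffset X.
Proof.
rewrite diffsetE; apply/imsetP => -[[x y]].
rewrite inE /= => /and5P[_ _ x0 y0 xy] /esym/eqP.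
by apply/negP; apply: dlog_div_neq0.
Qed.

Variables (k : nat) (C : {set {set F}}).
Hypotheses (card_C : (#|C| * ((2 ^ k - 1) * (2 ^ k - 2)) = 2 ^ n - 2)%N)
  (C_complete : forall X, X \in C -> complete n alpha k X)
  (C_disjoint : forall X Y, X \in C -> Y \in C -> X != Y ->
                            disjoint_complete n alpha k X Y).

Lemma card_diffset_C (X : {set F}) :
  X \in C -> #|diffset X| = ((2 ^ k - 1) * (2 ^ k - 2))%N.
Proof. by case/C_complete/andP=> _ /eqP. Qed.

Lemma eq_of_diffset_meet (X Y : {set F}) d :
  X \in C -> Y \in C -> d \in diffset X -> d \in diffset Y -> X = Y.
Proof.
move=> XC YC dX dY; apply/eqP; apply/negPn/negP => /(C_disjoint XC YC).
by case/and3P=> _ _ /eqP/setP/(_ d); rewrite inE dX dY inE.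
Qed.

Lemma diffsets_cover d : d != 0 -> exists2 X, X \in C & d \in diffset X.
Proof.
move=> d0; set Q := diffset @: C.
have diffset_gt0 X : X \in C -> (0 < #|diffset X|)%N.
  move=> XC; rewrite card_diffset_C // lt0n; apply/eqP => p0.
  by move: card_C; rewrite p0 muln0; have := order_gt1; lia.
have diffset_inj : {in C &, injective diffset}.
  move=> X Y XC YC eqXY; have [d' dX] := card_gt0P (diffset_gt0 X XC).
  by apply: (eq_of_diffset_meet XC YC dX); rewrite -eqXY.
have trivQ : trivIset Q.
  apply/trivIsetP => _ _ /imsetP[X XC ->] /imsetP[Y YC ->] neqXY.
  apply/pred0P => e /=; apply/andP => -[eX eY].
  by move: neqXY; rewrite (eq_of_diffset_meet XC YC eX eY) eqxx.
have card_cover : #|cover Q| = (2 ^ n - 2)%N.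
  rewrite -(eqP trivQ) big_imset //= -card_C -sum_nat_const.
  by apply: eq_bigr => X XC; rewrite card_diffset_C.
have cover_nz : cover Q = [set~ 0].
  apply/eqP; rewrite eqEcard cardsC1 card_Zp_order card_cover.
  apply/andP; split; last by lia.
  apply/subsetP => e /bigcupP[_ /imsetP[X XC ->] eX]; rewrite !inE.
  by apply: contraNneq (diffset_neq0 X) => <-.
have : d \in cover Q by rewrite cover_nz !inE.
by case/bigcupP => _ /imsetP[X XC ->]; exists X.
Qed.

Lemma dilate_nzpair c X x y : c != 0 -> x \in dilate c X -> y \in dilate c X ->
  x != 0 -> y != 0 -> x != y ->
  exists2 p, p \in nzpairs X & y = c * p.2 /\ log_ratio p = dlog (x / y).
Proof.
move=> c0 /imsetP[a aX ->] /imsetP[b bX ->] ca0 cb0 cab.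
exists (a, b); last by rewrite /log_ratio -mulf_div divff // mul1r.
rewrite inE /= aX bX /=; apply/and3P; split.
- by apply: contraNneq ca0 => ->; rewrite mulr0.
- by apply: contraNneq cb0 => ->; rewrite mulr0.
- by apply: contraNneq cab => ->.
Qed.

Lemma dilates_pair_uniq Z Z' x y : Z \in dilates C -> Z' \in dilates C ->
  x \in Z -> y \in Z -> x \in Z' -> y \in Z' -> x != 0 -> y != 0 -> x != y ->
  Z = Z'.
Proof.
case/imset2P=> X c XC; rewrite !inE => c0 ->.
case/imset2P=> X' c' X'C; rewrite !inE => c'0 -> xZ yZ xZ' yZ' x0 y0 xy.
have [p pX [def_y ratio_p]] := dilate_nzpair c0 xZ yZ x0 y0 xy.
have [p' pX' [def_y' ratio_p']] := dilate_nzpair c'0 xZ' yZ' x0 y0 xy.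
have eqXX' : X = X'.
  apply: (eq_of_diffset_meet XC X'C (d := dlog (x / y))); rewrite diffsetE.
    by rewrite -ratio_p imset_f.
  by rewrite -ratio_p' imset_f.
subst X'; have eq_pp' : p = p'.
  apply: (complete_log_ratio_inj (C_complete XC)) => //.
  by rewrite ratio_p ratio_p'.
subst p'; have p20 : p.2 != 0 by move: pX; rewrite inE => /and5P[].
by rewrite (mulIf p20 (etrans (esym def_y) def_y')).
Qed.

Lemma dilates_cover x y : x != 0 -> y != 0 -> x != y ->
  exists2 Z, Z \in dilates C & [set 0; x; y; x + y] \subset Z.
Proof.
move=> x0 y0 xy; have xy0 : x / y != 0 by rewrite mulf_neq0 ?invr_eq0.
have [X XC] := diffsets_cover (dlog_div_neq0 x0 y0 xy).
rewrite diffsetE => /imsetP[[a b]]; rewrite inE /= => /and5P[aX bX a0 b0 _].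
have ab0 : a / b != 0 by rewrite mulf_neq0 ?invr_eq0.
move=> /esym/(dlog_inj ab0 xy0) ab_xy; set c := y / b.
have c0 : c != 0 by rewrite mulf_neq0 ?invr_eq0.
have cb : c * b = y by rewrite divfK.
have ca : c * a = x by rewrite mulrAC -mulrA ab_xy mulrCA divff ?mulr1.
have cXk : ksubspace k (dilate c X).
  by apply: ksubspace_dilate; case/C_complete/andP: XC.
have [xZ yZ] : x \in dilate c X /\ y \in dilate c X.
  by rewrite -ca -cb !imset_f.
exists (dilate c X); first by apply/imset2P; exists X c; rewrite ?inE.
apply/subsetP => w; rewrite !inE -!orbA => /or4P[] /eqP-> //.
- by case/andP: cXk => /andP[].
- exact: ksubspaceD cXk xZ yZ.
Qed.

End DifferenceSets.

Theorem theorem1 (n : nat) (F : finFieldType) (alpha : F) (k : nat) :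
  prime n ->
  #|F| = (2 ^ n)%N ->
  (2 ^ n - 1)%N.-primitive_root alpha ->
  (2 <= k)%N ->
  (exists C : {set {set F}},
      (#|C| * ((2 ^ k - 1) * (2 ^ k - 2)) = 2 ^ n - 2)%N /\
      (forall X, X \in C -> complete n alpha k X) /\
      (forall X Y, X \in C -> Y \in C -> X != Y -> disjoint_complete n alpha k X Y)) ->
  exists S : {set {set F}}, steiner_structure k S.
Proof.
move=> /prime_gt1 n_gt1 cardF prim _ [C [card_C [C_complete C_disjoint]]].
have pcharF2 : 2 \in [pchar F] := card_finPcharP cardF (isT : prime 2).
exists (dilates C); split=> [Z | Y Y2].
  by apply: dilates_ksubspace => X /C_complete/andP[].
have [x [y [x0 y0 xy ->]]] := ksubspace2_basis pcharF2 Y2.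
have [Z0 Z0S sub_Z0] :=
  dilates_cover n_gt1 cardF prim card_C C_complete C_disjoint x0 y0 xy.
have mem_xy (Z : {set F}) :
    [set 0; x; y; x + y] \subset Z -> x \in Z /\ y \in Z.
  by move=> sub_Z; split; apply: (subsetP sub_Z); rewrite !inE eqxx ?orbT.
have [xZ0 yZ0] := mem_xy Z0 sub_Z0.
apply/eqP/cards1P; exists Z0; apply/setP => Z; rewrite !inE.
apply/andP/eqP => [[ZS /mem_xy[xZ yZ]] | ->]; last by [].
exact: (dilates_pair_uniq n_gt1 cardF prim C_complete C_disjoint
          ZS Z0S xZ yZ xZ0 yZ0 x0 y0 xy).
Qed.
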